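(* Let $\alpha(\ell)$ be the first-order formula in the language of rings $$\alpha(\ell):\ \ \neg\,\mathrm{C}(\ell)\ \wedge\ \forall f\,\exists q\,\big(\mathrm{C}(f-q\ell)\big),$$ where $\mathrm{C}(t)$ abbreviates the formula ''$t=0\ \vee\ \exists u\,(tu=1)$''. Then for every field $R$, the formula $\alpha$ defines in the ring $R[x]$ ($x$ a single indeterminate) exactly the set $L$ of polynomials of degree $1$. Moreover, for every field $R$ and every $\ell\in L\subseteq R[x]$ we have $\operatorname{POW}(\ell)=\operatorname{LPOW}(\ell)$. In particular, since $\operatorname{LPOW}(\ell)$ is defined by a fixed formula with parameter $\ell$, the sets $\operatorname{POW}(\ell)$, $\ell\in L$, are uniformly definable with parameter $\ell$ across all univariate polynomial rings over fields (of any characteristic).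
   Context: All rings are commutative and unital; $S^{*}$ denotes the units of $S$. For $\ell\in S$: $\operatorname{POW}(\ell)=\{\ell^n:n\ge1\}$; $\operatorname{LPOW}(\ell)$ is the set of $f\in S$ such that $\ell\mid f$, $(\ell-1)\mid(f-1)$, and every divisor of $f$ is a unit or a multiple of $\ell$. For a field $R$ and indeterminate $x$, $L\subseteq R[x]$ denotes the set of polynomials of degree exactly $1$. A family of sets is uniformly definable over a class of rings if a single first-order formula of the language of rings defines the corresponding set in every ring of the class. *)

From HB Require Import structures.
From mathcomp Require Import all_boot all_order all_algebra.
Set Implicit Arguments. Unset Strict Implicit. Unset Printing Implicit Defensive.
Import GRing.Theory.
Local Open Scope ring_scope.

Definition rdvd (S : comNzRingType) (a b : S) : Prop := exists c : S, b = a * c.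

Definition Cform (S : comNzRingType) (t : S) : Prop := t = 0 \/ exists u : S, t * u = 1.

Definition alpha (S : comNzRingType) (l : S) : Prop :=
  ~ Cform l /\ forall f : S, exists q : S, Cform (f - q * l).

Definition POW (S : comNzRingType) (l f : S) : Prop :=
  exists n : nat, (1 <= n)%N /\ f = l ^+ n.

Definition LPOW (S : comNzRingType) (l f : S) : Prop :=
  [/\ rdvd l f, rdvd (l - 1) (f - 1) &
      forall d : S, rdvd d f -> (exists u : S, d * u = 1) \/ rdvd l d].

From HB Require Import structures.
From mathcomp Require Import all_boot all_order all_algebra.
From mathcomp Require Import zify ring.
Set Implicit Arguments. Unset Strict Implicit. Unset Printing Implicit Defensive.
Import GRing.Theory.
Local Open Scope ring_scope.

(* We first translate the ring-theoretic vocabulary (rdvd, units, Cform) into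
   polynomial language: divisibility is %|, units are the polynomials of
   size 1, and C(t) means size t <= 1.  Then:
   - alpha(l) says "l is not constant and every f has a remainder of size <= 1
     modulo l"; Euclidean division gives this for size l = 2, and the test
     polynomial f = 'X rules out size l > 2.
   - If l is irreducible (every degree-1 l is), the divisors of l^n are the
     units and the multiples of l, so l^n is in LPOW(l) (POW_LPOW).
   - Conversely, for any non-constant l, a nonzero f whose divisors are units or
     multiples of l is c * l^m for a constant c (repeatedly divide by l); the
     condition (l - 1) | (f - 1) forces c = 1, and l | f forces m >= 1
     (LPOW_POW). *)

Section PolynomialsOverAField.
Variable R : fieldType.
Implicit Types (p q l f d t : {poly R}) (c : R).

Lemma rdvdP p q : rdvd p q <-> p %| q.
Proof.
split; first by case=> c ->; rewrite dvdp_mulIl.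
by case/dvdpP=> c ->; exists c; rewrite mulrC.
Qed.

Lemma unitP p : (exists u, p * u = 1) <-> size p = 1%N.
Proof.
have -> : (exists u, p * u = 1) <-> rdvd p 1 by split=> -[u pu]; exists u.
by rewrite rdvdP dvdp1; split=> /eqP.
Qed.

Lemma Cform_size t : Cform t <-> (size t <= 1)%N.
Proof.
rewrite /Cform unitP; split; first by case=> [->|->]; rewrite ?size_poly0.
by rewrite leq_eqVlt ltnS leqn0 size_poly_eq0 => /orP[/eqP|/eqP]; [right|left].
Qed.

Lemma small_remainder f l : l != 0 -> exists q, (size (f - q * l)%R < size l)%N.
Proof.
move=> l0; exists (f %/ l).
have -> : f - f %/ l * l = f %% l by rewrite {1}(divp_eq f l) addrAC subrr add0r.
exact: ltn_modpN0.
Qed.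

Lemma size_X_sub_mul q l : (2 < size l)%N -> (1 < size ('X - q * l)%R)%N.
Proof.
move=> sl; have [->|q0] := eqVneq q 0; first by rewrite mul0r subr0 size_polyX.
have l0 : l != 0 by rewrite -size_poly_gt0 ltnW // ltnW.
have sql : (2 < size (q * l)%R)%N.
  by apply: leq_trans sl (dvdp_leq _ _); rewrite ?mulf_neq0 ?dvdp_mull.
by rewrite addrC size_polyDl size_polyN ?size_polyX // ltnW.
Qed.

Lemma alpha_size2 l : alpha l <-> size l = 2%N.
Proof.
split.
  case=> nCl hrem.
  have sl : (1 < size l)%N by rewrite ltnNge; apply/negP=> /Cform_size.
  have [q /Cform_size sXq] := hrem 'X.
  case: (ltnP 2 (size l)) => [l2|l2]; last by apply/eqP; rewrite eqn_leq l2 sl.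
  by have := size_X_sub_mul q l2; rewrite ltnNge sXq.
move=> sl; split; first by move/Cform_size; rewrite sl.
have l0 : l != 0 by rewrite -size_poly_gt0 sl.
move=> f; have [q sq] := small_remainder f l0.
by exists q; apply/Cform_size; rewrite -ltnS -sl.
Qed.

Lemma size_subr1 l : (1 < size l)%N -> size (l - 1) = size l.
Proof. by move=> sl; rewrite size_polyDl // size_polyN size_poly1. Qed.

Lemma size2_irreducible l : size l = 2%N -> irreducible_poly l.
Proof.
move=> sl; split=> [|q sq1 ql]; first by rewrite sl.
have l0 : l != 0 by rewrite -size_poly_gt0 sl.
have q0 : q != 0 by apply: contraTneq ql => ->; rewrite dvd0p.
rewrite -dvdp_size_eqp //; have := dvdp_leq l0 ql.
by rewrite -size_poly_gt0 in q0; move: q0 sq1; rewrite sl; lia.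
Qed.

Lemma dvdp_exp_irredp l d n : irreducible_poly l -> d %| l ^+ n ->
  size d = 1%N \/ l %| d.
Proof.
move=> irr_l dln; have [cop|ncop] := boolP (coprimep d l).
  by left; apply/eqP; rewrite -coprimepp (coprimep_dvdl dln) ?coprimep_expr.
right; have [g1|gl] := irredp_XsubCP irr_l (dvdp_gcdr d l).
  by rewrite -gcdp_eqp1 g1 in ncop.
by rewrite -(eqp_dvdl _ gl) dvdp_gcdl.
Qed.

Lemma POW_LPOW l f : irreducible_poly l -> POW l f -> LPOW l f.
Proof.
move=> irr_l [n [n1 ->]]; split.
- by apply/rdvdP; rewrite -(subnK n1) exprD dvdp_mull.
- by exists (\sum_(i < n) l ^+ i); rewrite subrX1.
- move=> d /rdvdP/(dvdp_exp_irredp irr_l)[sd|ld].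
    by left; apply/unitP.
  by right; apply/rdvdP.
Qed.

Lemma scaled_power l f : (1 < size l)%N -> f != 0 ->
  (forall d, d %| f -> size d = 1%N \/ l %| d) ->
  exists c m, f = c%:P * l ^+ m.
Proof.
move=> sl; move: {2}(size f) (leqnn (size f)) => n.
elim: n f => [|n IH] f sf f0 hdiv; first by move: f0; rewrite -size_poly_gt0; lia.
have [/eqP/size_poly1P[c _ ->]|/dvdpP[g fg]] := hdiv f (dvdpp f).
  by exists c, 0%N; rewrite mulr1.
have g0 : g != 0 by apply: contraNneq f0 => g0; rewrite fg g0 mul0r.
have l0 : l != 0 by rewrite -size_poly_gt0; lia.
have sg : (size g <= n)%N.
  by move: sf sl; rewrite fg size_mul //; move: (size g) (size l) => a b; lia.
have [c [m gE]] : exists c m, g = c%:P * l ^+ m.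
  by apply: IH => // d dg; apply: hdiv; rewrite fg dvdp_mulr.
by exists c, m.+1; rewrite fg gE exprSr mulrA.
Qed.

Lemma dvdp_polyC_eq0 p c : (1 < size p)%N -> p %| c%:P -> c = 0.
Proof.
move=> sp pc; apply/eqP; apply: contraTT sp => c0; rewrite -leqNgt.
by apply: leq_trans (dvdp_leq _ pc) _; rewrite ?polyC_eq0 // size_polyC leq_b1.
Qed.

Lemma LPOW_POW l f : (1 < size l)%N -> LPOW l f -> POW l f.
Proof.
move=> sl [/rdvdP lf /rdvdP l1f1 hdiv].
have sl1 : (1 < size (l - 1)%R)%N by rewrite size_subr1.
have f0 : f != 0.
  apply: contraTneq l1f1 => ->.
  have -> : 0 - 1 = (-1)%:P :> {poly R} by rewrite sub0r polyCN polyC1.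
  by apply/negP=> /(dvdp_polyC_eq0 sl1)/eqP; rewrite oppr_eq0 oner_eq0.
have [c [m fE]] : exists c m, f = c%:P * l ^+ m.
  apply: scaled_power => // d /rdvdP/hdiv[/unitP|/rdvdP]; by [left|right].
have c1 : c = 1.
  have fE1 : f - 1 = c%:P * (l ^+ m - 1) + (c - 1)%:P.
    by rewrite fE polyCB polyC1; ring.
  rewrite fE1 dvdp_addr in l1f1; last by rewrite subrX1 dvdp_mull ?dvdp_mulIl.
  by apply/eqP; rewrite -subr_eq0; apply/eqP/(dvdp_polyC_eq0 sl1).
move: fE lf; rewrite c1 mul1r; case: m => [|m] -> lf.
  by move: lf sl; rewrite expr0 dvdp1 => /eqP ->.
by exists m.+1.
Qed.

End PolynomialsOverAField.

Theorem proposition1p7 :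
  (forall (R : fieldType) (l : {poly R}), alpha l <-> size l = 2%N) /\
  (forall (R : fieldType) (l : {poly R}), size l = 2%N ->
     forall f : {poly R}, POW l f <-> LPOW l f).
Proof.
split; first exact: alpha_size2.
move=> R l sl f; split; first exact/POW_LPOW/size2_irreducible.
by apply: LPOW_POW; rewrite sl.
Qed.
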